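(* Let $(\mathfrak g,\Delta)$ be a perm coalgebra, $r=\sum r^1\otimes r^2\in\mathfrak g\otimes\mathfrak g$ symmetric with $$r^1{}_{(1)}\otimes r^1{}_{(2)}\otimes r^2+r^1{}_{(1)}\otimes r^2\otimes r^1{}_{(2)}-r^1{}_{(2)}\otimes r^2\otimes r^1{}_{(1)}-r^2\otimes r^1{}_{(2)}\otimes r^1{}_{(1)}=0$$ (i.e. $(\mathfrak g,\Delta,r)$ is a cosymplectic perm coalgebra), and $\omega\in(\mathfrak g\otimes\mathfrak g)^*$ symmetric. Assume (i) $\omega$ satisfies the classical co-perm Yang–Baxter equation in $(\mathfrak g,\Delta)$, so that $(\mathfrak g,\Delta,\omega,\cdot_\omega)$ is a dual quasitriangular perm bialgebra, and (ii) $r$ satisfies the classical perm Yang–Baxter equation in the algebra $(\mathfrak g,\cdot_\omega)$, so that $(\mathfrak g,\cdot_\omega,r,\Delta_r)$ (with $\Delta_r$ formed using $\cdot_\omega$) is a quasitriangular perm bialgebra. Then $S:\mathfrak g\to\mathfrak g$, $S(x)=r^1\omega(r^2,x)$, makes $(\mathfrak g,\Delta,S)$ a Nijenhuis perm coalgebra, i.e. for all $x$: $$S(x_{(1)})\otimes S(x_{(2)})+S^2(x)_{(1)}\otimes S^2(x)_{(2)}=S(S(x)_{(1)})\otimes S(x)_{(2)}+S(x)_{(1)}\otimes S(S(x)_{(2)}).$$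
   Context: Over a field $K$; Sweedler notation $\Delta(x)=x_{(1)}\otimes x_{(2)}$. A perm coalgebra $(\mathfrak g,\Delta)$: $x_{(1)(1)}\otimes x_{(1)(2)}\otimes x_{(2)}=x_{(1)}\otimes x_{(2)(1)}\otimes x_{(2)(2)}=x_{(1)}\otimes x_{(2)(2)}\otimes x_{(2)(1)}$. $\omega$ symmetric: $\omega(x,y)=\omega(y,x)$; $r$ symmetric: invariant under the flip. Classical co-perm Yang–Baxter equation in $(\mathfrak g,\Delta)$: $\omega(x_{(1)},z)\omega(x_{(2)},y)-\omega(x,z_{(1)})\omega(y,z_{(2)})+\omega(y_{(1)},z)\omega(x,y_{(2)})-\omega(x,y_{(1)})\omega(y_{(2)},z)=0$; $x\cdot_\omega y=x_{(1)}\omega(x_{(2)},y)+y_{(1)}\omega(x,y_{(2)})-y_{(2)}\omega(x,y_{(1)})$. For a product $\cdot$ and $r$ with second copy $\bar r$: classical perm Yang–Baxter equation $r^1\bar r^1\otimes\bar r^2\otimes r^2-r^1\otimes\bar r^1\otimes r^2\bar r^2+\bar r^1\otimes r^1\bar r^2\otimes r^2-r^1\otimes r^2\bar r^1\otimes\bar r^2=0$ (products taken in $\cdot$), and $\Delta_r(x)=x\cdot r^1\otimes r^2+r^1\otimes x\cdot r^2-r^1\otimes r^2\cdot x$. *)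

(* Finite-dimensional coordinate model: g = K^n with basis
   e_0..e_{n-1}; g⊗g and g⊗g⊗g are represented by their coefficient arrays. *)
From mathcomp Require Import all_boot all_order all_algebra.
Set Implicit Arguments. Unset Strict Implicit. Unset Printing Implicit Defensive.
Import GRing.Theory.
Local Open Scope ring_scope.

Section PermDefs.
Variables (K : fieldType) (n : nat).

Definition vec := 'I_n -> K.
Definition ten2 := 'I_n -> 'I_n -> K.
Definition ten3 := 'I_n -> 'I_n -> 'I_n -> K.

Definition ebase (i : 'I_n) : vec := fun k => (i == k)%:R.

(* coproduct given by structure constants: Δ(e_i) = Σ_{j,k} c i j k e_j ⊗ e_k *)
Definition coprod := 'I_n -> 'I_n -> 'I_n -> K.
Definition Delta (c : coprod) (x : vec) : ten2 :=
  fun j k => \sum_(i < n) x i * c i j k.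

Definition tmap (f g : vec -> vec) (t : ten2) : ten2 :=
  fun a b => \sum_(j < n) \sum_(k < n) t j k * f (ebase j) a * g (ebase k) b.

(* (Δ ⊗ id) Δ x : x_(1)(1) ⊗ x_(1)(2) ⊗ x_(2) *)
Definition DeltaL (c : coprod) (x : vec) : ten3 :=
  fun a b d => \sum_(j < n) Delta c x j d * c j a b.
(* (id ⊗ Δ) Δ x : x_(1) ⊗ x_(2)(1) ⊗ x_(2)(2) *)
Definition DeltaR (c : coprod) (x : vec) : ten3 :=
  fun a b d => \sum_(j < n) Delta c x a j * c j b d.

Definition perm_coalgebra (c : coprod) : Prop :=
  forall (x : vec) (a b d : 'I_n),
    DeltaL c x a b d = DeltaR c x a b d /\
    DeltaR c x a b d = DeltaR c x a d b.

Definition symmetric2 (t : ten2) : Prop := forall i j, t i j = t j i.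

(* bilinear form ω with matrix w i j = ω(e_i, e_j) *)
Definition omega (w : ten2) (x y : vec) : K :=
  \sum_(i < n) \sum_(j < n) x i * y j * w i j.

(* cosymplectic condition on r (r = Σ r i j e_i ⊗ e_j):
   r^1_(1)⊗r^1_(2)⊗r^2 + r^1_(1)⊗r^2⊗r^1_(2)
   - r^1_(2)⊗r^2⊗r^1_(1) - r^2⊗r^1_(2)⊗r^1_(1) = 0 *)
Definition rD (c : coprod) (r : ten2) : ten3 :=
  (* r^1_(1) ⊗ r^1_(2) ⊗ r^2 *)
  fun a b d => \sum_(i < n) r i d * c i a b.
Definition cosymplectic (c : coprod) (r : ten2) : Prop :=
  forall a b d : 'I_n,
    rD c r a b d + rD c r a d b - rD c r d a b - rD c r d b a = 0.

Definition sumD (c : coprod) (x : vec) (f : 'I_n -> 'I_n -> K) : K :=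
  (* Σ x_(1) ... x_(2) with x_(1) = e_j, x_(2) = e_k *)
  \sum_(j < n) \sum_(k < n) Delta c x j k * f j k.
Definition co_perm_YBE (c : coprod) (w : ten2) : Prop :=
  forall x y z : vec,
    sumD c x (fun j k => omega w (ebase j) z * omega w (ebase k) y)
  - sumD c z (fun j k => omega w x (ebase j) * omega w y (ebase k))
  + sumD c y (fun j k => omega w (ebase j) z * omega w x (ebase k))
  - sumD c y (fun j k => omega w x (ebase j) * omega w (ebase k) z) = 0.

(* x ·_ω y = x_(1) ω(x_(2), y) + y_(1) ω(x, y_(2)) - y_(2) ω(x, y_(1)) *)
Definition prod_omega (c : coprod) (w : ten2) (x y : vec) : vec :=
  fun a => \sum_(k < n) Delta c x a k * omega w (ebase k) y
         + \sum_(k < n) Delta c y a k * omega w x (ebase k)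
         - \sum_(k < n) Delta c y k a * omega w x (ebase k).

Definition perm_YBE (mul : vec -> vec -> vec) (r : ten2) : Prop :=
  forall a b d : 'I_n,
    (* r^1 rb^1 ⊗ rb^2 ⊗ r^2 *)
    \sum_(i < n) \sum_(k < n) r i d * r k b * mul (ebase i) (ebase k) a
    (* r^1 ⊗ rb^1 ⊗ r^2 rb^2 *)
  - \sum_(j < n) \sum_(l < n) r a j * r b l * mul (ebase j) (ebase l) d
    (* rb^1 ⊗ r^1 rb^2 ⊗ r^2 *)
  + \sum_(i < n) \sum_(l < n) r i d * r a l * mul (ebase i) (ebase l) b
    (* r^1 ⊗ r^2 rb^1 ⊗ rb^2 *)
  - \sum_(j < n) \sum_(k < n) r a j * r k d * mul (ebase j) (ebase k) b = 0.

Definition Smap (r w : ten2) (x : vec) : vec :=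
  fun a => \sum_(j < n) r a j * omega w (ebase j) x.

Definition nijenhuis_coalg (c : coprod) (S : vec -> vec) : Prop :=
  forall (x : vec) (a b : 'I_n),
    tmap S S (Delta c x) a b + Delta c (S (S x)) a b =
    tmap S id (Delta c (S x)) a b + tmap id S (Delta c (S x)) a b.

End PermDefs.

From mathcomp Require Import all_boot all_order all_algebra ring.
Set Implicit Arguments. Unset Strict Implicit. Unset Printing Implicit Defensive.
Import GRing.Theory.
Local Open Scope ring_scope.

(* Write [r a] for the a-th row of r, so that S x = r^1 ω(r^2, x) has
   coordinates (S x)_a = ω(x, r a) and the matrix S_{qk} = ω(e_k, r q).
   Instantiating the co-perm Yang-Baxter equation at (x, r b, r a) rewrites
   (S ⊗ S) Δ(x), and the Nijenhuis defect at (a, b) becomes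
   Σ_q ω(x, e_q) (Σ_k S_{qk} C_{abk} - P_{abq}), where C is the cosymplectic
   tensor of r and P_{abd} = (r d · r b)_a - (r a · r b)_d + (r d · r a)_b - (r a · r d)_b
   is the classical perm Yang-Baxter tensor of r in (g, ·_ω); both vanish. *)

Section Coordinates.
Variables (K : fieldType) (n : nat).
Local Notation e := (ebase K).

Lemma sum_ebase_mull (F : 'I_n -> K) i : \sum_m e i m * F m = F i.
Proof.
rewrite (bigD1 i) //= /ebase eqxx mul1r big1 ?addr0 // => m.
by rewrite eq_sym => /negbTE ->; rewrite mul0r.
Qed.

Lemma sum_mul_ebase (F : 'I_n -> K) k : \sum_j F j * e j k = F k.
Proof.
rewrite -[RHS](sum_ebase_mull F).
by apply: eq_bigr => j _; rewrite mulrC /ebase eq_sym.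
Qed.

Definition linear_form (L : vec K n -> K) := forall y, L y = \sum_i y i * L (e i).

Lemma linear_formD L1 L2 :
  linear_form L1 -> linear_form L2 -> linear_form (fun y => L1 y + L2 y).
Proof.
by move=> h1 h2 y; rewrite h1 h2 -big_split; apply: eq_bigr => i _; rewrite mulrDr.
Qed.

Lemma linear_formB L1 L2 :
  linear_form L1 -> linear_form L2 -> linear_form (fun y => L1 y - L2 y).
Proof.
by move=> h1 h2 y; rewrite h1 h2 -sumrB; apply: eq_bigr => i _; rewrite mulrBr.
Qed.

Lemma linear_form_sum (L : 'I_n -> vec K n -> K) :
  (forall k, linear_form (L k)) -> linear_form (fun y => \sum_k L k y).
Proof.
move=> h y; under eq_bigr do rewrite h.
by rewrite exchange_big; apply: eq_bigr => i _; rewrite mulr_sumr.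
Qed.

Lemma linear_formMl a L : linear_form L -> linear_form (fun y => a * L y).
Proof.
by move=> h y; rewrite h mulr_sumr; apply: eq_bigr => i _; rewrite mulrCA.
Qed.

Lemma linear_formMr a L : linear_form L -> linear_form (fun y => L y * a).
Proof.
by move=> h y; rewrite h mulr_suml; apply: eq_bigr => i _; rewrite mulrA.
Qed.

Lemma linear_form_bilinear (B : vec K n -> vec K n -> K) :
    (forall v, linear_form (B^~ v)) -> (forall u, linear_form (B u)) ->
  forall u v, B u v = \sum_i \sum_k u i * v k * B (e i) (e k).
Proof.
move=> hl hr u v; rewrite (hl v u); apply: eq_bigr => i _.
by rewrite (hr (e i) v) mulr_sumr; apply: eq_bigr => k _; rewrite mulrA.
Qed.

Variables (c : coprod K n) (w : ten2 K n).

Lemma omega_ebasel i z : omega w (e i) z = \sum_j z j * w i j.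
Proof.
rewrite /omega exchange_big; apply: eq_bigr => j _.
rewrite -[RHS](sum_ebase_mull (fun m => z j * w m j)).
by apply: eq_bigr => m _; rewrite mulrA.
Qed.

Lemma omega_linear_forml z : linear_form (omega w ^~ z).
Proof.
move=> y; under [RHS]eq_bigr => i _ do rewrite omega_ebasel mulr_sumr.
by apply: eq_bigr => i _; apply: eq_bigr => j _; rewrite mulrA.
Qed.

Lemma omega_ebaser y j : omega w y (e j) = \sum_i y i * w i j.
Proof.
apply: eq_bigr => i _; rewrite -[RHS](sum_ebase_mull (fun m => y i * w i m)).
by apply: eq_bigr => m _; rewrite -mulrA mulrCA.
Qed.

Lemma omega_linear_formr y : linear_form (omega w y).
Proof.
move=> z; under [RHS]eq_bigr => j _ do rewrite omega_ebaser mulr_sumr.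
rewrite /omega exchange_big; apply: eq_bigr => j _; apply: eq_bigr => i _.
by rewrite mulrA [y i * _]mulrC.
Qed.

Lemma omega_sym : symmetric2 w -> forall y z, omega w y z = omega w z y.
Proof.
move=> w_sym y z; rewrite /omega exchange_big.
by apply: eq_bigr => j _; apply: eq_bigr => i _; rewrite [y i * _]mulrC w_sym.
Qed.

Lemma Delta_ebase i a b : Delta c (e i) a b = c i a b.
Proof. exact: sum_ebase_mull. Qed.

Lemma Delta_linear_form a b : linear_form (fun y => Delta c y a b).
Proof. by move=> y; apply: eq_bigr => i _; rewrite Delta_ebase. Qed.

Lemma prod_omega_linear_forml v a : linear_form (prod_omega c w ^~ v ^~ a).
Proof.
rewrite /prod_omega; apply: linear_formB; first apply: linear_formD.
all: apply: linear_form_sum => k.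
- exact/linear_formMr/Delta_linear_form.
- exact/linear_formMl/omega_linear_forml.
- exact/linear_formMl/omega_linear_forml.
Qed.

Lemma prod_omega_linear_formr u a : linear_form (prod_omega c w u ^~ a).
Proof.
rewrite /prod_omega; apply: linear_formB; first apply: linear_formD.
all: apply: linear_form_sum => k.
- exact/linear_formMl/omega_linear_formr.
- exact/linear_formMr/Delta_linear_form.
- exact/linear_formMr/Delta_linear_form.
Qed.

Lemma prod_omega_bilinear u v a :
  prod_omega c w u v a = \sum_i \sum_k u i * v k * prod_omega c w (e i) (e k) a.
Proof.
exact: (linear_form_bilinear (prod_omega_linear_forml ^~ a)
                             (prod_omega_linear_formr ^~ a)).
Qed.

Lemma tmap_idr (f : vec K n -> vec K n) t a b :
  tmap f id t a b = \sum_j t j b * f (e j) a.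
Proof. by apply: eq_bigr => j _; rewrite sum_mul_ebase. Qed.

Lemma tmap_idl (g : vec K n -> vec K n) t a b :
  tmap id g t a b = \sum_k t a k * g (e k) b.
Proof.
rewrite /tmap exchange_big; apply: eq_bigr => k _.
rewrite -[RHS](sum_mul_ebase (fun j => t j k * g (e k) b)).
by apply: eq_bigr => j _; rewrite mulrAC.
Qed.

Lemma Smap_omega (r : ten2 K n) x a : Smap r w x a = omega w (r a) x.
Proof. by rewrite omega_linear_forml. Qed.

End Coordinates.

Section SymmetricTensors.
Variables (K : fieldType) (n : nat) (c : coprod K n) (r w : ten2 K n).
Hypotheses (r_sym : symmetric2 r) (w_sym : symmetric2 w).
Local Notation e := (ebase K).
Local Notation S := (Smap r w).

Lemma Smap_ebase j a : S (e j) a = omega w (e j) (r a).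
Proof. by rewrite Smap_omega omega_sym. Qed.

Lemma Smap_lincomb x a : S x a = \sum_q omega w x (e q) * r q a.
Proof.
rewrite Smap_omega omega_sym // omega_linear_formr.
by apply: eq_bigr => q _; rewrite mulrC r_sym.
Qed.

Lemma linear_form_Smap L x :
  linear_form L -> L (S x) = \sum_q omega w x (e q) * L (r q).
Proof.
move=> L_lin; rewrite L_lin; under eq_bigr do rewrite Smap_lincomb mulr_suml.
rewrite exchange_big; apply: eq_bigr => q _.
by rewrite (L_lin (r q)) mulr_sumr; apply: eq_bigr => i _; rewrite mulrA.
Qed.

Lemma Delta_Smap x a b :
  Delta c (S x) a b = \sum_q omega w x (e q) * Delta c (r q) a b.
Proof. exact: linear_form_Smap (Delta_linear_form c a b). Qed.

Lemma omega_Smapl x y : omega w (S x) y = \sum_q omega w x (e q) * omega w (r q) y.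
Proof. exact: linear_form_Smap (omega_linear_forml w y). Qed.

Lemma rD_row a b d : rD c r a b d = Delta c (r d) a b.
Proof. by apply: eq_bigr => i _; rewrite r_sym. Qed.

Lemma prod_omega_rows u v a :
  prod_omega c w (r u) (r v) a =
  \sum_k (Delta c (r u) a k * omega w (e k) (r v)
          + Delta c (r v) a k * omega w (e k) (r u)
          - Delta c (r v) k a * omega w (e k) (r u)).
Proof.
rewrite /prod_omega -big_split -sumrB; apply: eq_bigr => k _.
by rewrite !(omega_sym w_sym (r u)).
Qed.

Lemma perm_YBE_rows a b d :
  perm_YBE (prod_omega c w) r ->
  prod_omega c w (r d) (r b) a - prod_omega c w (r a) (r b) d
  + prod_omega c w (r d) (r a) b - prod_omega c w (r a) (r d) b = 0.
Proof.
move=> /(_ a b d) <-; rewrite !prod_omega_bilinear.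
congr (_ - _ + _ - _); apply: eq_bigr => i _; apply: eq_bigr => k _.
all: by congr (_ * _ * _); exact: r_sym.
Qed.

Lemma tmap_Smap_Delta x a b :
  co_perm_YBE c w ->
  tmap S S (Delta c x) a b =
    \sum_q \sum_k omega w x (e q) * Delta c (r a) q k * omega w (e k) (r b)
  - \sum_q \sum_k omega w x (e q) * Delta c (r b) k q * omega w (e k) (r a)
  + \sum_q \sum_k omega w x (e q) * Delta c (r b) q k * omega w (e k) (r a).
Proof.
move=> /(_ x (r b) (r a)) YBE; apply/eqP; rewrite -subr_eq0; apply/eqP.
rewrite -[RHS]YBE !opprD !opprK !addrA /sumD; congr (_ - _ + _ - _).
- by apply: eq_bigr => j _; apply: eq_bigr => k _; rewrite !Smap_ebase mulrA.
- apply: eq_bigr => j _; apply: eq_bigr => k _.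
  by rewrite (omega_sym w_sym (r b)); ring.
- rewrite [RHS]exchange_big; apply: eq_bigr => q _; apply: eq_bigr => k _; ring.
- by apply: eq_bigr => j _; apply: eq_bigr => k _; ring.
Qed.

Lemma Delta_Smap_Smap x a b :
  Delta c (S (S x)) a b =
  \sum_q \sum_k omega w x (e q) * omega w (e k) (r q) * Delta c (r k) a b.
Proof.
rewrite Delta_Smap; under eq_bigr => k _ do rewrite omega_Smapl mulr_suml.
rewrite exchange_big; apply: eq_bigr => q _; apply: eq_bigr => k _.
by rewrite (omega_sym w_sym (r q)).
Qed.

Lemma tmap_Smap_id x a b :
  tmap S id (Delta c (S x)) a b =
  \sum_q \sum_k omega w x (e q) * Delta c (r q) k b * omega w (e k) (r a).
Proof.
rewrite tmap_idr; under eq_bigr => k _ do rewrite Delta_Smap Smap_ebase mulr_suml.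
exact: exchange_big.
Qed.

Lemma tmap_id_Smap x a b :
  tmap id S (Delta c (S x)) a b =
  \sum_q \sum_k omega w x (e q) * Delta c (r q) a k * omega w (e k) (r b).
Proof.
rewrite tmap_idl; under eq_bigr => k _ do rewrite Delta_Smap Smap_ebase mulr_suml.
exact: exchange_big.
Qed.

End SymmetricTensors.

Theorem theorem3p13 (K : fieldType) (n : nat)
    (c : coprod K n) (r w : ten2 K n) :
  perm_coalgebra c ->
  symmetric2 r -> cosymplectic c r ->
  symmetric2 w ->
  co_perm_YBE c w ->
  perm_YBE (prod_omega c w) r ->
  nijenhuis_coalg c (Smap r w).
Proof.
move=> _ r_sym r_cosymp w_sym co_YBE p_YBE x a b.
rewrite tmap_Smap_Delta // Delta_Smap_Smap // tmap_Smap_id // tmap_id_Smap //.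
apply/eqP; rewrite -subr_eq0; apply/eqP.
transitivity (\sum_q omega w x (ebase K q) *
  (\sum_k omega w (ebase K k) (r q) *
            (rD c r a b k + rD c r a k b - rD c r k a b - rD c r k b a)
   - (prod_omega c w (r q) (r b) a - prod_omega c w (r a) (r b) q
      + prod_omega c w (r q) (r a) b - prod_omega c w (r a) (r q) b))).
  rewrite -!(sumrB, big_split); apply: eq_bigr => q _ /=.
  rewrite !prod_omega_rows // -!(sumrB, big_split) mulr_sumr.
  apply: eq_bigr => k _ /=; rewrite !rD_row //; ring.
apply: big1 => q _; rewrite perm_YBE_rows // subr0 big1 ?mulr0 // => k _.
by rewrite r_cosymp mulr0.
Qed.
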